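(* Let $\mathbb{H}$ be one of $\mathbb{Z}$, $\mathbb{N}$, $\mathbb{N}^+$. Every upper quasi-density $\mu^\ast$ on $\mathbb{H}$ has the strong Darboux property: for all $X,Y\subseteq\mathbb{H}$ with $X\subseteq Y$ and every real $a$ with $\mu^\ast(X)\le a\le \mu^\ast(Y)$, there exists $A$ with $X\subseteq A\subseteq Y$ and $\mu^\ast(A)=a$. In particular, this holds for every upper density on $\mathbb{H}$.
   Context: $\mathbb{N}=\{0,1,2,\dots\}$, $\mathbb{N}^+=\{1,2,\dots\}$. $\mathbb{H}$ denotes one of $\mathbb{Z}$, $\mathbb{N}$, $\mathbb{N}^+$. For $X\subseteq\mathbb{H}$, $k\in\mathbb{N}^+$, $h\in\mathbb{N}$, write $k\cdot X+h:=\{kx+h: x\in X\}$. An upper quasi-density on $\mathbb{H}$ is a function $\mu^\ast:\mathcal{P}(\mathbb{H})\to\mathbb{R}$ such that: (i) $\mu^\ast(\mathbb{H})=1$; (ii) $\mu^\ast(X)\le 1$ for all $X\subseteq\mathbb{H}$; (iii) $\mu^\ast(X\cup Y)\le\mu^\ast(X)+\mu^\ast(Y)$ for all $X,Y\subseteq\mathbb{H}$; (iv) $\mu^\ast(k\cdot X+h)=\frac1k\mu^\ast(X)$ for all $X\subseteq\mathbb{H}$ and $h,k\in\mathbb{N}^+$. An upper density is an upper quasi-density that is moreover monotone ($X\subseteq Y\Rightarrow \mu^\ast(X)\le\mu^\ast(Y)$). A function $f:\mathcal{P}(S)\to\mathbb{R}$ has the strong Darboux property if for all $X\subseteq Y\subseteq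 S$ and every $a\in[f(X),f(Y)]$ there is $A$ with $X\subseteq A\subseteq Y$ and $f(A)=a$ (if $f(Y)<f(X)$ the interval is empty and the condition is vacuous). *)

From Stdlib Require Import Reals ZArith.
Open Scope R_scope.

Inductive HKind : Type := HZ | HN | HNpos.

Definition inH (K : HKind) (z : Z) : Prop :=
  match K with
  | HZ => True
  | HN => (0 <= z)%Z
  | HNpos => (1 <= z)%Z
  end.

Definition carrier (K : HKind) : Type := { z : Z | inH K z }.

Definition fullset {S : Type} : S -> Prop := fun _ => True.
Definition setU {S : Type} (X Y : S -> Prop) : S -> Prop := fun x => X x \/ Y x.
Definition subset {S : Type} (X Y : S -> Prop) : Prop := forall x, X x -> Y x.

Definition affine_image {K : HKind} (k h : Z) (X : carrier K -> Prop) : carrier K -> Prop :=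
  fun y => exists x, X x /\ proj1_sig y = (k * proj1_sig x + h)%Z.

Definition upper_quasi_density (K : HKind) (mu : (carrier K -> Prop) -> R) : Prop :=
  mu fullset = 1 /\
  (forall X, mu X <= 1) /\
  (forall X Y, mu (setU X Y) <= mu X + mu Y) /\
  (forall X (k h : Z), (1 <= k)%Z -> (1 <= h)%Z ->
      mu (affine_image k h X) = / IZR k * mu X).

Definition upper_density (K : HKind) (mu : (carrier K -> Prop) -> R) : Prop :=
  upper_quasi_density K mu /\ (forall X Y, subset X Y -> mu X <= mu Y).

Definition strong_darboux {S : Type} (f : (S -> Prop) -> R) : Prop :=
  forall X Y, subset X Y -> forall a, f X <= a <= f Y ->
    exists A, subset X A /\ subset A Y /\ f A = a.

(** An upper quasi-density is subadditive, and every subset of a residue class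
    [r mod m] has upper quasi-density at most [1/m]: up to at most two points
    such a set lies in the image of [H] under [x |-> m x + r + m], and sets of
    at most two points have upper quasi-density [0].  These two facts are all that is used.

    Given [X ⊆ Y] and [mu X <= a <= mu Y], bisect [Y] along the residue classes
    modulo [2^n]: maintain [X ⊆ L_n ⊆ Y] and a class [C_n] modulo [2^n] with
    [mu L_n <= a <= mu (L_n ∪ (Y ∩ C_n))].  Split [C_n] into its two subclasses
    modulo [2^(n+1)]; if adding to [L_n] the part of [Y] in the first one keeps
    [mu <= a], do so and continue in the second one, otherwise continue in the
    first one.  The union [A] of the [L_n] differs from [L_n] and from
    [L_n ∪ (Y ∩ C_n)] only inside [C_n], so subadditivity gives
    [|mu A - a| <= 2^-n] for every [n]. *)

From Stdlib Require Import Reals ZArith Lia Lra.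
From Stdlib Require Import FunctionalExtensionality PropExtensionality ProofIrrelevance Classical.
Open Scope R_scope.

Definition setD {T : Type} (A B : T -> Prop) : T -> Prop := fun x => A x /\ ~ B x.

Definition residue_class {T : Type} (v : T -> Z) (m r : Z) : T -> Prop :=
  fun y => exists q, v y = (m * q + r)%Z.

Definition dyadic (n : nat) : Z := (2 ^ Z.of_nat n)%Z.

Lemma set_ext {T : Type} (A B : T -> Prop) : (forall x, A x <-> B x) -> A = B.
Proof.
  intros H; apply functional_extensionality; intros x.
  apply propositional_extensionality, H.
Qed.

Lemma subadditive_le_setD {T : Type} (f : (T -> Prop) -> R) :
  (forall A B, f (setU A B) <= f A + f B) ->
  forall W B, subset B W -> f W <= f B + f (setD W B).
Proof.
  intros f_subadd W B HBW.
  replace W with (setU B (setD W B)) at 1; [apply f_subadd|].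
  apply set_ext; intros x; unfold setU, setD; split.
  - intros [Hx | [Hx _]]; auto.
  - intros Hx; destruct (classic (B x)); auto.
Qed.

Lemma residue_class_split {T : Type} (v : T -> Z) m r y :
  residue_class v m r y <->
  residue_class v (2 * m) r y \/ residue_class v (2 * m) (r + m) y.
Proof.
  split.
  - intros [q Hq]; destruct (Z.Even_or_Odd q) as [[q' ->] | [q' ->]];
      [left | right]; exists q'; rewrite Hq; ring.
  - intros [[q Hq] | [q Hq]]; [exists (2 * q)%Z | exists (2 * q + 1)%Z];
      rewrite Hq; ring.
Qed.

Lemma dyadic_S n : dyadic (S n) = (2 * dyadic n)%Z.
Proof. unfold dyadic; rewrite Nat2Z.inj_succ, Z.pow_succ_r; lia. Qed.

Lemma dyadic_pos n : (1 <= dyadic n)%Z.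
Proof.
  unfold dyadic; pose proof (Z.pow_pos_nonneg 2 (Z.of_nat n)); lia.
Qed.

Lemma le_0_of_le_inv_dyadic x : (forall n, x <= / IZR (dyadic n)) -> x <= 0.
Proof.
  intros Hx; apply Rnot_lt_le; intros Hpos.
  destruct (Pow_x_infinity 2 ltac:(rewrite Rabs_right; lra) (2 / x)) as [N HN].
  specialize (HN N (Nat.le_refl N)); specialize (Hx N).
  unfold dyadic in Hx; rewrite <- pow_IZR in Hx.
  pose proof (pow_lt 2 N ltac:(lra)) as H2N.
  rewrite Rabs_right in HN by lra.
  apply (Rmult_le_compat_r (2 ^ N)) in Hx; [|lra].
  rewrite Rinv_l in Hx by lra.
  apply (Rmult_ge_compat_r x) in HN; [|lra].
  unfold Rdiv in HN; rewrite Rmult_assoc, Rinv_l in HN by lra.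
  nra.
Qed.

Section Bisection.

Variables (T : Type) (v : T -> Z) (f : (T -> Prop) -> R).
Hypothesis f_subadditive : forall A B, f (setU A B) <= f A + f B.
Hypothesis f_residue_class_le : forall n r W, (0 <= r < dyadic n)%Z ->
  subset W (residue_class v (dyadic n) r) -> f W <= / IZR (dyadic n).

Section Construction.

Variables (X Y : T -> Prop) (a : R).
Hypotheses (HXY : subset X Y) (HXa : f X <= a) (HaY : a <= f Y).

Definition part (n : nat) (r : Z) : T -> Prop :=
  fun y => Y y /\ residue_class v (dyadic n) r y.

Fixpoint bisect (n : nat) : (T -> Prop) * Z :=
  match n with
  | O => (X, 0%Z)
  | S n =>
      let L := fst (bisect n) in
      let r := snd (bisect n) in
      let L' := setU L (part (S n) r) in
      if Rle_dec (f L') a then (L', (r + dyadic n)%Z) else (L, r)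
  end.

Notation lower n := (fst (bisect n)).
Notation residue n := (snd (bisect n)).

Definition upper (n : nat) : T -> Prop := setU (lower n) (part n (residue n)).

Definition bisect_limit : T -> Prop := fun y => exists n, lower n y.

Lemma part_split n r y :
  part n r y <-> part (S n) r y \/ part (S n) (r + dyadic n) y.
Proof.
  unfold part; rewrite dyadic_S, residue_class_split; tauto.
Qed.

Lemma residue_range n : (0 <= residue n < dyadic n)%Z.
Proof.
  induction n as [|n IH]; [cbn; lia|].
  cbn [bisect]; rewrite dyadic_S.
  destruct (Rle_dec _ a); cbn [snd]; lia.
Qed.

Lemma lower_mono n : subset (lower n) (lower (S n)).
Proof.
  intros y Hy; cbn [bisect]; destruct (Rle_dec _ a); cbn [fst]; [left|]; auto.
Qed.

Lemma upper_anti n : subset (upper (S n)) (upper n).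
Proof.
  unfold upper; cbn [bisect].
  intros y Hy; destruct (Rle_dec _ a); cbn [fst snd] in Hy.
  - destruct Hy as [[Hy | Hy] | Hy]; [left | right; apply part_split ..]; auto.
  - destruct Hy as [Hy | Hy]; [left | right; apply part_split]; auto.
Qed.

Lemma X_sub_lower n : subset X (lower n).
Proof.
  induction n as [|n IH]; [intros y; auto|].
  intros y Hy; apply lower_mono, IH, Hy.
Qed.

Lemma lower_sub_Y n : subset (lower n) Y.
Proof.
  induction n as [|n IH]; [exact HXY|].
  cbn [bisect]; destruct (Rle_dec _ a); cbn [fst]; [|exact IH].
  intros y [Hy | [Hy _]]; auto.
Qed.

Lemma f_lower_le n : f (lower n) <= a.
Proof.
  induction n as [|n IH]; [exact HXa|].
  cbn [bisect]; destruct (Rle_dec _ a) as [Hle | _]; [exact Hle | exact IH].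
Qed.

Lemma f_upper_ge n : a <= f (upper n).
Proof.
  induction n as [|n IH].
  - replace (upper 0) with Y; [exact HaY|].
    apply set_ext; intros y; unfold upper, part, setU; cbn [bisect fst snd].
    split; [intros Hy; right; split; [exact Hy | exists (v y)]; change (dyadic 0) with 1%Z; ring|].
    intros [Hy | [Hy _]]; auto.
  - unfold upper in *; cbn [bisect].
    destruct (Rle_dec _ a) as [Hle | Hgt]; cbn [fst snd]; [|lra].
    (* After adding the first half, the new upper set is the old one. *)
    replace (setU _ _) with (setU (lower n) (part n (residue n))); [exact IH|].
    apply set_ext; intros y; unfold setU; rewrite (part_split n (residue n)); tauto.
Qed.

Lemma lower_mono_le n k : (n <= k)%nat -> subset (lower n) (lower k).
Proof. induction 1; [intros y; auto | intros y Hy; apply lower_mono; auto]. Qed.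

Lemma upper_anti_le n k : (n <= k)%nat -> subset (upper k) (upper n).
Proof. induction 1; [intros y; auto | intros y Hy; apply IHle, upper_anti, Hy]. Qed.

Lemma bisect_limit_sub_upper n : subset bisect_limit (upper n).
Proof.
  intros y [k Hk]; destruct (Nat.le_ge_cases k n) as [Hkn | Hnk].
  - left; apply (lower_mono_le k n Hkn), Hk.
  - apply (upper_anti_le n k Hnk); left; exact Hk.
Qed.

Lemma upper_setD_lower n :
  subset (setD (upper n) (lower n)) (residue_class v (dyadic n) (residue n)).
Proof. intros y [[Hy | [_ Hy]] Hn]; [contradiction | exact Hy]. Qed.

Lemma f_bisect_limit : f bisect_limit = a.
Proof.
  assert (Habove : forall n, f bisect_limit - a <= / IZR (dyadic n)).
  { intros n.
    assert (Hsub : subset (lower n) bisect_limit) by (intros y Hy; exists n; exact Hy).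
    pose proof (subadditive_le_setD f f_subadditive _ _ Hsub) as Hsplit.
    assert (Hrest : f (setD bisect_limit (lower n)) <= / IZR (dyadic n)).
    { apply (f_residue_class_le n (residue n)); [apply residue_range|].
      intros y [Hy Hn]; apply upper_setD_lower; split; [|exact Hn].
      apply bisect_limit_sub_upper, Hy. }
    pose proof (f_lower_le n); lra. }
  assert (Hbelow : forall n, a - f bisect_limit <= / IZR (dyadic n)).
  { intros n.
    pose proof (subadditive_le_setD f f_subadditive _ _ (bisect_limit_sub_upper n))
      as Hsplit.
    assert (Hrest : f (setD (upper n) bisect_limit) <= / IZR (dyadic n)).
    { apply (f_residue_class_le n (residue n)); [apply residue_range|].
      intros y [Hy Hn]; apply upper_setD_lower; split; [exact Hy|].
      intros Hl; apply Hn; exists n; exact Hl. }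
    pose proof (f_upper_ge n); lra. }
  apply le_0_of_le_inv_dyadic in Habove.
  apply le_0_of_le_inv_dyadic in Hbelow.
  lra.
Qed.

End Construction.

Lemma strong_darboux_of_residue_class_le : strong_darboux f.
Proof.
  intros X Y HXY a [HXa HaY].
  exists (bisect_limit X Y a); repeat split.
  - intros y Hy; exists 0%nat; exact Hy.
  - intros y [n Hn]; exact (lower_sub_Y X Y a HXY n y Hn).
  - apply f_bisect_limit; assumption.
Qed.

End Bisection.

Section UpperQuasiDensity.

Variables (K : HKind) (mu : (carrier K -> Prop) -> R).
Hypothesis Hmu : upper_quasi_density K mu.

Lemma mu_setU_le A B : mu (setU A B) <= mu A + mu B.
Proof. apply Hmu. Qed.

Lemma mu_le1 A : mu A <= 1.
Proof. apply Hmu. Qed.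

Lemma mu_affine_image A k h :
  (1 <= k)%Z -> (1 <= h)%Z -> mu (affine_image k h A) = / IZR k * mu A.
Proof. apply Hmu. Qed.

Lemma val_inj (x y : carrier K) : proj1_sig x = proj1_sig y -> x = y.
Proof.
  destruct x as [x px], y as [y py]; cbn; intros <-.
  f_equal; apply proof_irrelevance.
Qed.

Definition point (p : Z) : carrier K -> Prop := fun y => proj1_sig y = p.

Lemma affine_image_point k h (x : carrier K) :
  affine_image k h (point (proj1_sig x)) = point (k * proj1_sig x + h)%Z.
Proof.
  apply set_ext; intros y; unfold affine_image, point; split.
  - intros [x' [-> Hy]]; exact Hy.
  - intros Hy; exists x; split; [reflexivity | exact Hy].
Qed.

Lemma mu_empty : mu (fun _ => False) = 0.
Proof.
  assert (E : affine_image 2 1 (fun _ : carrier K => False) = (fun _ => False)).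
  { apply set_ext; intros y; split; [intros [x [[] _]] | intros []]. }
  pose proof (mu_affine_image (fun _ => False) 2 1 ltac:(lia) ltac:(lia)) as H.
  rewrite E in H; lra.
Qed.

(* [2 x + 1] is the image of [x] under both [2 . _ + 1] and [1 . _ + (x + 1)]. *)
Lemma mu_point_nonneg (x : carrier K) :
  (0 <= proj1_sig x)%Z -> mu (point (proj1_sig x)) = 0.
Proof.
  intros Hx.
  pose proof (mu_affine_image (point (proj1_sig x)) 2 1 ltac:(lia) ltac:(lia)) as H2.
  pose proof (mu_affine_image (point (proj1_sig x)) 1 (proj1_sig x + 1)
    ltac:(lia) ltac:(lia)) as H1.
  rewrite !affine_image_point in *.
  replace (1 * proj1_sig x + (proj1_sig x + 1))%Z with (2 * proj1_sig x + 1)%Z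
    in H1 by ring.
  rewrite H2 in H1; lra.
Qed.

Lemma mu_point (x : carrier K) : mu (point (proj1_sig x)) = 0.
Proof.
  destruct (Z_lt_le_dec (proj1_sig x) 0) as [Hneg | Hnn]; [|exact (mu_point_nonneg x Hnn)].
  assert (one_in_H : inH K 1) by (destruct K; cbn; lia).
  pose proof (mu_affine_image (point (proj1_sig x)) 1 (1 - proj1_sig x)
    ltac:(lia) ltac:(lia)) as H.
  rewrite affine_image_point in H.
  replace (1 * proj1_sig x + (1 - proj1_sig x))%Z with (proj1_sig (exist _ 1%Z one_in_H))
    in H by (cbn [proj1_sig]; ring).
  rewrite mu_point_nonneg in H by (cbn; lia); lra.
Qed.

Lemma mu_subset_point A p : subset A (point p) -> mu A = 0.
Proof.
  intros HA; destruct (classic (exists y, A y)) as [[y Hy] | Hempty].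
  - replace A with (point (proj1_sig y)); [apply mu_point|].
    apply set_ext; intros x; split; [|intros Hx; apply HA in Hx, Hy; congruence].
    intros Hx; apply val_inj in Hx; subst; exact Hy.
  - replace A with (fun _ : carrier K => False); [apply mu_empty|].
    apply set_ext; intros x; split; [intros [] | intros Hx; apply Hempty; eauto].
Qed.

Lemma mu_subset_pair A p q : subset A (setU (point p) (point q)) -> mu A <= 0.
Proof.
  intros HA.
  assert (Hp : subset (fun y => A y /\ point p y) A) by (intros y [Hy _]; exact Hy).
  pose proof (subadditive_le_setD mu mu_setU_le _ _ Hp) as Hsplit.
  rewrite (mu_subset_point (fun y => A y /\ point p y) p) in Hsplit
    by (intros y [_ Hy]; exact Hy).
  rewrite (mu_subset_point (setD A _) q) in Hsplit; [lra|].
  intros y [Hy Hn]; destruct (HA y Hy); [exfalso; tauto | assumption].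
Qed.

Lemma mu_le_inv_of_affine_range W k h : (1 <= k)%Z -> (1 <= h)%Z ->
  (forall w, W w -> exists x : carrier K, proj1_sig w = (k * proj1_sig x + h)%Z) ->
  mu W <= / IZR k.
Proof.
  intros Hk Hh HW.
  set (W' := fun x : carrier K =>
    exists w, W w /\ proj1_sig w = (k * proj1_sig x + h)%Z).
  replace W with (affine_image k h W').
  - rewrite mu_affine_image by assumption.
    assert (Hk' : 1 <= IZR k) by (apply IZR_le; lia).
    pose proof (Rinv_0_lt_compat (IZR k) ltac:(lra)).
    pose proof (mu_le1 W'); nra.
  - apply set_ext; intros y; unfold affine_image, W'; split.
    + intros [x [[w [Hw Hwx]] Hyx]]; replace y with w; [exact Hw|].
      apply val_inj; congruence.
    + intros Hy; destruct (HW y Hy) as [x Hx]; exists x; eauto.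
Qed.

Lemma mu_residue_class_le (W : carrier K -> Prop) m r : (1 <= m)%Z -> (0 <= r < m)%Z ->
  subset W (residue_class (@proj1_sig _ _) m r) -> mu W <= / IZR m.
Proof.
  intros Hm Hr HW.
  set (Shifted := fun y : carrier K =>
    exists q, proj1_sig y = (m * q + r)%Z /\ inH K (q - 1)).
  assert (HS : subset (fun y : carrier K => W y /\ Shifted y) W) by (intros y [Hy _]; exact Hy).
  pose proof (subadditive_le_setD mu mu_setU_le _ _ HS) as Hsplit.
  assert (Hshifted : mu (fun y => W y /\ Shifted y) <= / IZR m).
  { apply (mu_le_inv_of_affine_range _ m (r + m)); [lia | lia |].
    intros w [_ [q [Hq Hq1]]]; exists (exist _ (q - 1)%Z Hq1); cbn; rewrite Hq; ring. }
  (* A non-shifted point [m q + r] of [H] has [q = 0] or [q = 1]. *)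
  assert (Hrest : mu (setD W (fun y => W y /\ Shifted y)) <= 0).
  { apply (mu_subset_pair _ r (r + m)); intros y [Hy Hn].
    destruct (HW y Hy) as [q Hq].
    assert (Hq1 : ~ inH K (q - 1)) by (intros Hq1; apply Hn; split; [|exists q]; auto).
    pose proof (proj2_sig y) as HyH; rewrite Hq in HyH.
    assert (Hq01 : q = 0%Z \/ q = 1%Z)
      by (destruct K; cbn in *; [exfalso; auto | nia | nia]).
    unfold setU, point; rewrite Hq; destruct Hq01 as [-> | ->]; [left | right]; ring. }
  lra.
Qed.

End UpperQuasiDensity.

Theorem mainTheorem1 :
  (forall (K : HKind) (mu : (carrier K -> Prop) -> R),
      upper_quasi_density K mu -> strong_darboux mu) /\
  (forall (K : HKind) (mu : (carrier K -> Prop) -> R),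
      upper_density K mu -> strong_darboux mu).
Proof.
  assert (Hquasi : forall (K : HKind) (mu : (carrier K -> Prop) -> R),
             upper_quasi_density K mu -> strong_darboux mu).
  { intros K mu Hmu.
    apply (strong_darboux_of_residue_class_le _ (@proj1_sig _ _)).
    - exact (mu_setU_le K mu Hmu).
    - intros n r W Hr HW; exact (mu_residue_class_le K mu Hmu W _ r (dyadic_pos n) Hr HW). }
  split; [exact Hquasi|].
  intros K mu [Hmu _]; exact (Hquasi K mu Hmu).
Qed.
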